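(* Let $U^{(1)},U^{(2)}$ be unitary operators on $\mathbb{C}^2\otimes\mathbb{C}^2$ (first factor the ''environment'', second the ''system''), and define quantum channels on $\mathcal{M}_2(\mathbb{C})$ by $T_j(\rho)=\mathrm{tr}_E\big[U^{(j)}(|0\rangle\langle0|\otimes\rho)U^{(j)\dagger}\big]$ for $j=1,2$, where $\mathrm{tr}_E$ is the partial trace over the first factor, and let $T=\frac12T_1+\frac12T_2$. Let $U_k\in\mathrm{SU}(2)$ and let $|\psi\rangle,|\phi_1\rangle,|\phi_2\rangle\in\mathbb{C}^2$ be unit vectors. Consider five qubits ordered as (ancilla $a$, environment $E$, system $S$, $f_1$, $f_2$) prepared in $|+\rangle|0\rangle|\psi\rangle|\phi_1\rangle|\phi_2\rangle$ with $|+\rangle=\frac{1}{\sqrt2}(|0\rangle+|1\rangle)$, and apply in order: (i) $U_k$ on $S$; (ii) controlled on $a$ being $|1\rangle$, swap qubit $E$ with $f_1$ and qubit $S$ with $f_2$; (iii) $U^{(1)}$ on the pair $(E,S)$ and $U^{(2)}$ on the pair $(f_1,f_2)$ (first listed qubit as first tensor factor); (iv) again, controlled on $a$ being $|1\rangle$, swap $E$ with $f_1$ and $S$ with $f_2$; (v) $U_k^{\dagger}$ on $S$. Then the reduced density matrix of qubit $S$ of the final state (partial trace over $a,E,f_1,f_2$) equals $$U_k^{\dagger}\,T\big(U_k\rho U_k^{\dagger}\big)\,U_k=\tfrac12U_k^{\dagger}T_1(U_k\rho U_k^{\dagger})U_k+\tfrac12U_k^{\dagger}T_2(U_k\rho U_k^{\dagger})U_k,\qquad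 \rho=|\psi\rangle\langle\psi| .$$
   Context: In the paper, $T_1,T_2$ are specific quasi-extreme single-qubit channels with Stinespring unitaries $U^{(1)},U^{(2)}$ and $T$ is the channel $T_t^{(\theta_k)}$, so that the output is the constituent channel $T_t^{(k)}(\rho)=U_k^{\dagger}T_t^{(\theta_k)}(U_k\rho U_k^\dagger)U_k$; the statement above holds for arbitrary two-qubit unitaries as given. $\{|0\rangle,|1\rangle\}$ is the computational basis. *)

(* Complex scalars: an arbitrary numClosedFieldType C
   (e.g. the complex numbers), conjugation Num.conj. *)
From mathcomp Require Import all_boot all_order all_algebra.
From mathcomp Require Import mxtens.
Set Implicit Arguments. Unset Strict Implicit. Unset Printing Implicit Defensive.
Import Order.TTheory GRing.Theory Num.Theory.
Local Open Scope ring_scope.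

Section QDefs.
Variable C : numClosedFieldType.

Definition adj m n (A : 'M[C]_(m, n)) : 'M[C]_(n, m) := (map_mx Num.conj A)^T.

Definition unitary n (U : 'M[C]_n) : Prop := U *m adj U = 1%:M.

Definition special_unitary (U : 'M[C]_2) : Prop := unitary U /\ \det U = 1.

Definition unit_vec (v : 'cV[C]_2) : Prop := \sum_(i < 2) `|v i 0| ^+ 2 = 1.

Definition proj (v : 'cV[C]_2) : 'M[C]_2 := v *m adj v.

Definition ket0 : 'cV[C]_2 := \col_i (if i == 0 then 1 else 0).

(* two-qubit index (x,y) of C^2 (x) C^2, first factor major (Kronecker) *)
Definition ix2 (x y : 'I_2) : 'I_(2 * 2) := mxtens_index (x, y).

Definition ptrE (M : 'M[C]_(2 * 2)) : 'M[C]_2 :=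
  \matrix_(s, s') \sum_(e < 2) M (ix2 e s) (ix2 e s').

Definition stinespring (U : 'M[C]_(2 * 2)) (rho : 'M[C]_2) : 'M[C]_2 :=
  ptrE (U *m (proj ket0 *t rho) *m adj U).

(* Five-qubit pure states as amplitude functions, qubits ordered
   (a, E, S, f1, f2). *)
Definition state5 := 'I_2 -> 'I_2 -> 'I_2 -> 'I_2 -> 'I_2 -> C.

Definition init5 (psi phi1 phi2 : 'cV[C]_2) : state5 :=
  fun a e s f1 f2 =>
    (sqrtC (2%:R : C))^-1 * ket0 e 0 * psi s 0 * phi1 f1 0 * phi2 f2 0.

Definition gateS (V : 'M[C]_2) (st : state5) : state5 :=
  fun a e s f1 f2 => \sum_(s' < 2) V s s' * st a e s' f1 f2.

Definition gateES (W : 'M[C]_(2 * 2)) (st : state5) : state5 :=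
  fun a e s f1 f2 =>
    \sum_(e' < 2) \sum_(s' < 2) W (ix2 e s) (ix2 e' s') * st a e' s' f1 f2.

Definition gateF (W : 'M[C]_(2 * 2)) (st : state5) : state5 :=
  fun a e s f1 f2 =>
    \sum_(g1 < 2) \sum_(g2 < 2) W (ix2 f1 f2) (ix2 g1 g2) * st a e s g1 g2.

Definition cswap (st : state5) : state5 :=
  fun a e s f1 f2 => if a == 1 then st a f1 f2 e s else st a e s f1 f2.

Definition reducedS (st : state5) : 'M[C]_2 :=
  \matrix_(s, s') \sum_(a < 2) \sum_(e < 2) \sum_(f1 < 2) \sum_(f2 < 2)
      st a e s f1 f2 * Num.conj (st a e s' f1 f2).

End QDefs.

From mathcomp Require Import all_boot all_order all_algebra.
From mathcomp Require Import mxtens ring.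
Set Implicit Arguments. Unset Strict Implicit. Unset Printing Implicit Defensive.
Import Order.TTheory GRing.Theory Num.Theory.
Local Open Scope ring_scope.

(* Before the final U_k^dagger, the circuit has prepared
   (|0>|x_0>|y_0> + |1>|x_1>|y_1>) / sqrt 2, where x_a = U^(a)(|0> (x) U_k psi)
   lives on (E,S) and y_a = U^(3-a)(phi_1 (x) phi_2) on (f_1,f_2): on the
   branch a = 1 the controlled swaps route the system through U^(2).  Tracing
   out (f_1,f_2) only leaves the squared norms of the y_a, which are 1 since
   unitaries preserve the norm of the product state, tracing out the ancilla
   averages the two branches, and tracing out E turns branch a into
   T_a(U_k rho U_k^dagger). *)

Section Circuit.
Variable C : numClosedFieldType.

Lemma sum_ord2 (V : nmodType) (F : 'I_2 -> V) : \sum_(i < 2) F i = F 0 + F 1.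
Proof. by rewrite big_ord_recl big_ord1; congr (F _ + F _); apply: val_inj. Qed.

Lemma sum_mxtens_index (V : nmodType) m n (F : 'I_(m * n) -> V) :
  \sum_(k < m * n) F k = \sum_(i < m) \sum_(j < n) F (mxtens_index (i, j)).
Proof.
rewrite pair_bigA /=; apply: (reindex (fun p => mxtens_index (p.1, p.2))).
exists (@mxtens_unindex m n) => [[i j] _|k _]; first by rewrite mxtens_indexK.
by rewrite -surjective_pairing mxtens_unindexK.
Qed.

Lemma adjM m n p (A : 'M[C]_(m, n)) (B : 'M[C]_(n, p)) :
  adj (A *m B) = adj B *m adj A.
Proof. by rewrite /adj map_mxM trmx_mul. Qed.

Lemma adjK m n (A : 'M[C]_(m, n)) : adj (adj A) = A.
Proof. by apply/matrixP => i j; rewrite !mxE conjCK. Qed.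

Lemma adj_tens m n p q (A : 'M[C]_(m, n)) (B : 'M[C]_(p, q)) :
  adj (A *t B) = adj A *t adj B.
Proof. by rewrite /adj map_mxT trmx_tens. Qed.

Lemma mxtens_index0 : mxtens_index (0 : 'I_1, 0 : 'I_1) = 0 :> 'I_1.
Proof. exact: val_inj. Qed.

Lemma tens_colE m n (u : 'cV[C]_m) (v : 'cV[C]_n) i j :
  (u *t v) (mxtens_index (i, j)) 0 = u i 0 * v j 0.
Proof. by rewrite -[in LHS]mxtens_index0 tensmxE. Qed.

Definition sqnorm n (v : 'cV[C]_n) : C := (adj v *m v) 0 0.

Lemma sqnorm_unitary n (U : 'M[C]_n) (v : 'cV[C]_n) :
  unitary U -> sqnorm (U *m v) = sqnorm v.
Proof.
move=> /mulmx1C adjUU.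
by rewrite /sqnorm adjM !mulmxA -(mulmxA (adj v)) adjUU mulmx1.
Qed.

Lemma sqnorm_tens m n (u : 'cV[C]_m) (v : 'cV[C]_n) :
  sqnorm (u *t v) = sqnorm u * sqnorm v.
Proof.
rewrite /sqnorm -[LHS]/((adj (u *t v) *m (u *t v) : 'M_(1 * 1)%N) 0 0).
by rewrite adj_tens tensmx_mul -[in LHS]mxtens_index0 tensmxE.
Qed.

Lemma sqnorm_unit_vec (v : 'cV[C]_2) : unit_vec v -> sqnorm v = 1.
Proof.
rewrite /unit_vec /sqnorm mxE => <-.
by apply: eq_bigr => i _; rewrite !mxE normCK mulrC.
Qed.

Lemma proj_mulmx (V : 'M[C]_2) (v : 'cV[C]_2) :
  V *m proj v *m adj V = proj (V *m v).
Proof. by rewrite /proj adjM !mulmxA. Qed.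

Lemma stinespring_proj (U : 'M[C]_(2 * 2)) (x : 'cV[C]_2) :
  stinespring U (proj x) =
  ptrE (U *m (ket0 C *t x) *m adj (U *m (ket0 C *t x))).
Proof.
by rewrite /stinespring /proj -tensmx_mul -adj_tens adjM !mulmxA.
Qed.

Lemma reducedS_gateS (V : 'M[C]_2) (st : state5 C) :
  reducedS (gateS V st) = V *m reducedS st *m adj V.
Proof.
apply/matrixP => s s'; rewrite !mxE /gateS.
under [in RHS]eq_bigr => j _ do rewrite !mxE.
under [in RHS]eq_bigr => j _ do under eq_bigr => i _ do rewrite !mxE.
by rewrite !sum_ord2 !rmorphD !rmorphM; ring.
Qed.

Lemma eq_reducedS (st st' : state5 C) :
  (forall a e s f1 f2, st a e s f1 f2 = st' a e s f1 f2) ->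
  reducedS st = reducedS st'.
Proof.
move=> eq_st; apply/matrixP => s s'; rewrite !mxE.
by do 4![apply: eq_bigr => ? _]; rewrite !eq_st.
Qed.

Lemma invsqrt2_mul_conj : (sqrtC 2%:R)^-1 * ((sqrtC 2%:R)^-1)^* = 2%:R^-1 :> C.
Proof.
have sqrt2_real : (sqrtC 2%:R : C)^-1 \is Num.real.
  by rewrite rpredV ger0_real // sqrtC_ge0 ler0n.
by rewrite (conj_Creal sqrt2_real) -expr2 exprVn sqrtCK.
Qed.

Definition branch_state (x y : 'I_2 -> 'cV[C]_(2 * 2)) : state5 C :=
  fun a e s f1 f2 => (sqrtC 2%:R)^-1 * (x a (ix2 e s) 0 * y a (ix2 f1 f2) 0).

Lemma reducedS_branch_state (x y : 'I_2 -> 'cV[C]_(2 * 2)) :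
  reducedS (branch_state x y) =
  \sum_(a < 2) (2%:R^-1 * sqnorm (y a)) *: ptrE (x a *m adj (x a)).
Proof.
apply/matrixP => s s'; rewrite !mxE summxE; apply: eq_bigr => a _.
rewrite !mxE /sqnorm mxE sum_mxtens_index -invsqrt2_mul_conj.
rewrite /branch_state !sum_ord2 !mxE !big_ord1 !mxE !rmorphM.
ring.
Qed.

Lemma circuit_branch_state (U1 U2 : 'M[C]_(2 * 2)) (Uk : 'M[C]_2)
    (psi phi1 phi2 : 'cV[C]_2) a e s f1 f2 :
  cswap (gateF U2 (gateES U1 (cswap (gateS Uk (init5 psi phi1 phi2)))))
    a e s f1 f2 =
  branch_state (fun b => (if b == 0 then U1 else U2) *m (ket0 C *t (Uk *m psi)))
    (fun b => (if b == 0 then U2 else U1) *m (phi1 *t phi2)) a e s f1 f2.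
Proof.
have [-> | ->] : a = 0 \/ a = 1.
  by case: a => [[|[|//]]] ?; [left | right]; apply: val_inj.
all: rewrite /branch_state /cswap /gateF /gateES /gateS /init5 /=.
all: rewrite !mxE !sum_mxtens_index !sum_ord2 !tens_colE !mxE !sum_ord2 /=; ring.
Qed.

End Circuit.

Theorem theorem5 (C : numClosedFieldType)
  (U1 U2 : 'M[C]_(2 * 2)) (Uk : 'M[C]_2) (psi phi1 phi2 : 'cV[C]_2) :
  unitary U1 -> unitary U2 -> special_unitary Uk ->
  unit_vec psi -> unit_vec phi1 -> unit_vec phi2 ->
  let T := fun rho : 'M[C]_2 =>
    2%:R^-1 *: stinespring U1 rho + 2%:R^-1 *: stinespring U2 rho in
  let final :=
    gateS (adj Uk) (cswap (gateF U2 (gateES U1 (cswap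
      (gateS Uk (init5 psi phi1 phi2)))))) in
  reducedS final = adj Uk *m T (Uk *m proj psi *m adj Uk) *m Uk.
Proof.
move=> U1_unitary U2_unitary _ _ phi1_unit phi2_unit T final.
rewrite /final reducedS_gateS adjK (eq_reducedS (circuit_branch_state _ _ _ _ _ _)).
rewrite reducedS_branch_state sum_ord2 /= !sqnorm_unitary // sqnorm_tens.
by rewrite !sqnorm_unit_vec // !mulr1 proj_mulmx /T !stinespring_proj.
Qed.
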